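(* Let $\Sigma$ be a finite alphabet and let $s_1,s_2\in\Sigma^n$ be two related strings of length $n$ (each symbol occurs equally often in both). Let $B=\{b_i : i\in I\}$ be the set of all blocks of length at least two, listed in an arbitrary fixed order $i_0,i_1,\dots,i_{m-1}$ ($m=|I|$), and let $D$ be the decision diagram constructed from the dynamic program described in the context (one node per reachable state on each stage, arcs and weights given by the transition and cost functions, root weight $n$, terminal $\mathbf T$). Then $D$ is an exact decision diagram for the MCSP, i.e. the set of assignments $x\in\{0,1\}^{I\cup\{\lambda\}}$ encoded by the $r$–$\mathbf T$ paths of $D$ equals the set of feasible assignments of the MCSP formulation (those with $x_\lambda=1$ and with $\neg(x_i\wedge x_j)$ for every pair of overlapping blocks $b_i,b_j$), the weight of the path encoding a feasible $x$ equals $n+\sum_{i\in I:\,x_i=1}(1-t_i)$, which is the number of substrings in the common partition of $s_1$ and $s_2$ consisting of the chosen blocks together with single symbols for all uncovered positions, and consequently $\mathrm{Opt}(D)=\mathrm{Opt}(\mathrm{MCSP})$: the minimum-weight $r$–$\mathbf T$ paths encode exactly the optimal feasible assignments, and the minimum path weight equals the minimum size of a common partition of $s_1$ and $s_2$.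
   Context: For a string $s$ of length $n$ and $0\le i<j\le n$, $s[i:j]$ denotes the substring consisting of the symbols at positions $i,\dots,j-1$ (positions indexed from $0$). $1^n$ ($0^n$) denotes the string of $n$ ones (zeros). Minimum Common String Partition (MCSP): for related strings $s_1,s_2$, a solution is a partition of $s_1$ and of $s_2$ into multisets $P_1,P_2$ of non-overlapping consecutive substrings with $P_1=P_2$; its value is $|P_1|=|P_2|$, to be minimized. A block is a triple $b=(k^1,k^2,t)$ with $t\in\{1,\dots,n\}$, $k^1,k^2\in\{0,\dots,n-t\}$ and $s_1[k^1:k^1+t]=s_2[k^2:k^2+t]$. Blocks $b_i=(k_i^1,k_i^2,t_i)$ and $b_j=(k_j^1,k_j^2,t_j)$ overlap if $k_i^1-t_j<k_j^1<k_i^1+t_i$ or $k_i^2-t_j<k_j^2<k_i^2+t_i$. $B$ is the set of blocks with $t\ge2$, indexed by $I$; $\lambda\notin I$ is an extra index. The MCSP formulation has Boolean variables $x_i$, $i\in I\cup\{\lambda\}$, constraints $\neg(x_i\wedge x_j)$ for overlapping $b_i,b_j$, and objective $n+\sum_{i\in I: x_i=1}(1-t_i)$. Dynamic program: states are pairs $(bs^1,bs^2)$ of bitstrings in $\{0,1\}^n$. Stage $0$ contains only the root state $(1^n,1^n)$; the variables are processed in the order $x_{i_0},\dots,x_{i_{m-1}},x_\lambda$, and the final stage contains only the terminal state $(0^n,0^n)$. Transitions from state $(bs^1,bs^2)$ on variable $x_i$: for $i\in I$, $x_i=0$ leads to $(bs^1,bs^2)$ with cost $0$; $x_i=1$ is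 defined only if $bs^c[j]=1$ for all $k_i^c\le j<k_i^c+t_i$ for both $c=1,2$, and then leads to the state obtained by setting these positions to $0$ in $bs^1$ and $bs^2$ respectively, with cost $1-t_i$; for $\lambda$, $x_\lambda=1$ leads to $(0^n,0^n)$ with cost $0$ and $x_\lambda=0$ is undefined. The root value is $n$. Decision diagram $D$: a layered directed acyclic multigraph with layers $L_0,\dots,L_{m+1}$; $L_0=\{r\}$ is the root (root state, weight $n$), layer $L_\ell$ for $\ell\le m$ contains one node per state reachable on stage $\ell$ and is associated with the $\ell$-th variable, and $L_{m+1}=\{\mathbf T\}$. Each defined transition gives an arc labeled by the value of the variable ($0$-arc or $1$-arc) with weight equal to the transition cost. An $r$–$\mathbf T$ path encodes the assignment given by its arc labels; its weight is $n$ plus the sum of its arc weights. $\mathrm{Opt}(D)$ is the set of assignments encoded by minimum-weight $r$–$\mathbf T$ paths, and $\mathrm{Opt}(\mathrm{MCSP})$ the set of feasible assignments of minimum objective value. *)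

From HB Require Import structures.
From mathcomp Require Import all_boot all_order all_algebra.
Set Implicit Arguments. Unset Strict Implicit. Unset Printing Implicit Defensive.
Import Order.TTheory GRing.Theory Num.Theory.

Definition substr (S : eqType) (s : seq S) (i j : nat) : seq S :=
  take (j - i) (drop i s).

Definition block := (nat * nat * nat)%type.
Definition bk1 (b : block) : nat := b.1.1.
Definition bk2 (b : block) : nat := b.1.2.
Definition blen (b : block) : nat := b.2.
Definition block0 : block := (0, 0, 0).

Definition is_block (S : eqType) (n : nat) (s1 s2 : seq S) (b : block) : bool :=
  [&& 1 <= blen b, blen b <= n, bk1 b <= n - blen b, bk2 b <= n - blen b &
      substr s1 (bk1 b) (bk1 b + blen b) == substr s2 (bk2 b) (bk2 b + blen b)].

Definition is_long_block (S : eqType) (n : nat) (s1 s2 : seq S) (b : block) : bool :=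
  is_block n s1 s2 b && (2 <= blen b).

(* b_i and b_j overlap:
   k_i^1 - t_j < k_j^1 < k_i^1 + t_i  or  k_i^2 - t_j < k_j^2 < k_i^2 + t_i
   (the first inequality written as k_i^c < k_j^c + t_j to stay in nat) *)
Definition overlap (bi bj : block) : bool :=
  ((bk1 bi < bk1 bj + blen bj) && (bk1 bj < bk1 bi + blen bi)) ||
  ((bk2 bi < bk2 bj + blen bj) && (bk2 bj < bk2 bi + blen bi)).

(* The MCSP formulation.  B is the list [b_{i_0}; ...; b_{i_{m-1}}]    *)
(* (m = size B); an assignment is x : seq bool of size m+1, where      *)
(* x_{i_l} = nth false x l for l < m and x_lambda = nth false x m.     *)

Definition feasible (B : seq block) (x : seq bool) : Prop :=
  [/\ size x = (size B).+1,
      nth false x (size B) = true &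
      forall i j, i < size B -> j < size B -> i != j ->
        overlap (nth block0 B i) (nth block0 B j) ->
        ~~ (nth false x i && nth false x j)].

Definition objective (B : seq block) (n : nat) (x : seq bool) : int :=
  (Posz n + \sum_(i < size B | nth false x i) (1 - Posz (blen (nth block0 B i))))%R.

Definition optimal (B : seq block) (n : nat) (x : seq bool) : Prop :=
  feasible B x /\ forall y, feasible B y -> (objective B n x <= objective B n y)%R.

Definition state := (seq bool * seq bool)%type.
Definition root_state (n : nat) : state := (nseq n true, nseq n true).
Definition terminal_state (n : nat) : state := (nseq n false, nseq n false).

Definition fits (bs : seq bool) (k t : nat) : bool :=
  all (fun j => nth false bs j) (iota k t).

Definition clear_range (bs : seq bool) (k t : nat) : seq bool :=
  [seq (if (k <= j) && (j < k + t) then false else nth false bs j)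
  | j <- iota 0 (size bs)].

(* transition on stage l (variable x_{i_l} if l < m, x_lambda if l = m)
   from state u with value v: None if undefined, else Some (target, cost) *)
Definition trans (B : seq block) (n l : nat) (u : state) (v : bool)
  : option (state * int) :=
  if l < size B then
    let b := nth block0 B l in
    if v then
      if fits u.1 (bk1 b) (blen b) && fits u.2 (bk2 b) (blen b) then
        Some ((clear_range u.1 (bk1 b) (blen b), clear_range u.2 (bk2 b) (blen b)),
              (1 - Posz (blen b))%R)
      else None
    else Some (u, 0%R)
  else if l == size B then
    (if v then Some (terminal_state n, 0%R) else None)
  else None.

Fixpoint run (B : seq block) (n l : nat) (u : state) (xs : seq bool) : option state :=
  match xs with
  | [::] => Some u
  | v :: xs' =>
      match trans B n l u v with
      | Some (u', _) => run B n l.+1 u' xs'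
      | None => None
      end
  end.

Definition in_layer (B : seq block) (n l : nat) (u : state) : Prop :=
  exists xs : seq bool, size xs = l /\ run B n 0 (root_state n) xs = Some u.

(* an r-T path of D: node sequence us = (u_0 = r, ..., u_{m+1} = T) and arc
   labels xs = (x_0, ..., x_m); the arc with label x_l goes from node u_l of
   layer L_l to u_{l+1} along a defined transition. *)
Definition rT_path (B : seq block) (n : nat) (us : seq state) (xs : seq bool) : Prop :=
  [/\ size xs = (size B).+1,
      size us = (size B).+2,
      nth (root_state n) us 0 = root_state n,
      nth (root_state n) us (size B).+1 = terminal_state n &
      forall l, l <= size B ->
        in_layer B n l (nth (root_state n) us l) /\
        exists w, trans B n l (nth (root_state n) us l) (nth false xs l)
                  = Some (nth (root_state n) us l.+1, w)].

Definition arc_weight (B : seq block) (n l : nat) (u : state) (v : bool) : int :=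
  match trans B n l u v with Some (_, w) => w | None => 0%R end.

Definition path_weight (B : seq block) (n : nat) (us : seq state) (xs : seq bool) : int :=
  (Posz n + \sum_(l < (size B).+1)
              arc_weight B n l (nth (root_state n) us l) (nth false xs l))%R.

Definition min_path (B : seq block) (n : nat) (us : seq state) (xs : seq bool) : Prop :=
  rT_path B n us xs /\
  forall us' xs', rT_path B n us' xs' ->
    (path_weight B n us xs <= path_weight B n us' xs')%R.

(* a partition of s into consecutive substrings is given by the list c of
   the (positive) lengths of its pieces, from left to right *)
Definition is_partition (S : eqType) (s : seq S) (c : seq nat) : bool :=
  all (fun t => 0 < t) c && (sumn c == size s).

Fixpoint pieces (S : eqType) (s : seq S) (c : seq nat) : seq (seq S) :=
  match c with
  | [::] => [::]
  | t :: c' => take t s :: pieces (drop t s) c'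
  end.

Fixpoint intervals_from (start : nat) (c : seq nat) : seq (nat * nat) :=
  match c with
  | [::] => [::]
  | t :: c' => (start, t) :: intervals_from (start + t) c'
  end.
Definition intervals (c : seq nat) := intervals_from 0 c.

(* (c1, c2) is a common partition: the multisets of pieces coincide;
   its size is size c1 (= size c2) *)
Definition common_partition (S : eqType) (s1 s2 : seq S) (c1 c2 : seq nat) : bool :=
  [&& is_partition s1 c1, is_partition s2 c2 & perm_eq (pieces s1 c1) (pieces s2 c2)].

Definition chosen (B : seq block) (x : seq bool) : seq block :=
  [seq nth block0 B i | i <- iota 0 (size B) & nth false x i].

Definition uncovered1 (B : seq block) (n : nat) (x : seq bool) : seq nat :=
  [seq j <- iota 0 n | ~~ has (fun b => (bk1 b <= j) && (j < bk1 b + blen b)) (chosen B x)].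
Definition uncovered2 (B : seq block) (n : nat) (x : seq bool) : seq nat :=
  [seq j <- iota 0 n | ~~ has (fun b => (bk2 b <= j) && (j < bk2 b + blen b)) (chosen B x)].

From HB Require Import structures.
From mathcomp Require Import all_boot all_order all_algebra.
From mathcomp Require Import zify.
From Stdlib Require Import Classical Wf_nat.
Import Order.TTheory GRing.Theory Num.Theory.
Set Implicit Arguments. Unset Strict Implicit. Unset Printing Implicit Defensive.

(* Along an assignment, the state of the dynamic program is the pair of bitstrings marking the
   positions of s1 and s2 not yet covered by a chosen block, so the 1-arc of b_i exists exactly
   when b_i overlaps no previously chosen block. Hence r-T paths encode exactly the feasible
   assignments, and their arc weights add up to the objective n + sum (1 - t_i).
   The chosen blocks of a feasible assignment, together with the uncovered positions, tile both
   strings; as s1 and s2 are related, the uncovered symbols form the same multiset on both sides,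
   so they match up as single-symbol pieces and give a common partition whose size is the
   objective. Conversely, pairing equal pieces of any common partition yields pairwise
   non-overlapping blocks, and the long ones form a feasible assignment whose objective is the
   size of the partition. *)

(* [lia] treats [@fst (Equality.sort _) _ a] and [@fst nat nat a] as distinct atoms,
   so pairs are destructed first. *)
Ltac pair_lia :=
  repeat match goal with x : (_ * _)%type |- _ => destruct x end; simpl in *; lia.

(** * Intervals and tilings *)

Definition in_interval (a : nat * nat) (j : nat) : bool := (a.1 <= j) && (j < a.1 + a.2).

Definition meets (a b : nat * nat) : bool := (a.1 < b.1 + b.2) && (b.1 < a.1 + a.2).

Lemma meetsC a b : meets a b = meets b a.
Proof. by rewrite /meets andbC. Qed.

Lemma meetsxx a : 0 < a.2 -> meets a a.
Proof. by rewrite /meets => a_pos; lia. Qed.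

Lemma meetsP a b : 0 < a.2 -> 0 < b.2 ->
  reflect (exists j, in_interval a j && in_interval b j) (meets a b).
Proof.
move=> a_pos b_pos; apply: (iffP andP) => [[ab ba]|[j /andP[/andP[aj ja] /andP[bj jb]]]].
  by exists (maxn a.1 b.1); rewrite /in_interval; apply/andP; split; apply/andP; split; lia.
by split; lia.
Qed.

Definition slice (S : Type) (s : seq S) (a : nat * nat) : seq S := take a.2 (drop a.1 s).

Lemma size_slice (S : Type) (s : seq S) a : a.1 + a.2 <= size s -> size (slice s a) = a.2.
Proof. by rewrite /slice size_take size_drop => ?; case: ltnP; lia. Qed.

Lemma slice_substr (S : eqType) (s : seq S) k t : substr s k (k + t) = slice s (k, t).
Proof. by rewrite /substr addKn. Qed.

Lemma map_snd_intervals_from p c : map snd (intervals_from p c) = c.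
Proof. by elim: c p => //= t c IH p; rewrite IH. Qed.

Lemma size_intervals_from p c : size (intervals_from p c) = size c.
Proof. by rewrite -(size_map snd) map_snd_intervals_from. Qed.

Lemma mem_intervals_from p c (a : nat * nat) : all (fun t => 0 < t) c -> a \in intervals_from p c ->
  [/\ p <= a.1, 0 < a.2 & a.1 + a.2 <= p + sumn c].
Proof.
elim: c p => //= t c IH p /andP[t_pos c_pos]; rewrite inE => /predU1P[->|a_in] /=.
  by split => //; lia.
by have [] := IH _ c_pos a_in; split => //; lia.
Qed.

Lemma intervals_from_disjoint p c : all (fun t => 0 < t) c ->
  {in intervals_from p c &, forall a b, a != b -> ~~ meets a b}.
Proof.
elim: c p => //= t c IH p /andP[t_pos c_pos] a b; rewrite !inE.
case/predU1P=> [->|a_in]; case/predU1P=> [->|b_in].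
- by rewrite eqxx.
- by move=> _; have [] := mem_intervals_from c_pos b_in; rewrite /meets /=; lia.
- by move=> _; have [] := mem_intervals_from c_pos a_in; rewrite /meets /=; lia.
- exact: IH c_pos a b a_in b_in.
Qed.

Lemma uniq_intervals_from p c : all (fun t => 0 < t) c -> uniq (intervals_from p c).
Proof.
elim: c p => //= t c IH p /andP[t_pos c_pos]; rewrite IH // andbT.
by apply/negP => /(mem_intervals_from c_pos) [] /=; lia.
Qed.

Lemma pieces_drop (S : eqType) (s : seq S) p c :
  pieces (drop p s) c = map (slice s) (intervals_from p c).
Proof. by elim: c p => //= t c IH p; rewrite drop_drop addnC IH. Qed.

Lemma pieces_intervals (S : eqType) (s : seq S) c : pieces s c = map (slice s) (intervals c).
Proof. by rewrite -pieces_drop drop0. Qed.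

Lemma flatten_pieces (S : eqType) (s : seq S) c : flatten (pieces s c) = take (sumn c) s.
Proof. by elim: c s => /= [s|t c IH s]; rewrite ?take0 // IH -takeD. Qed.

Section Tiling.

Variables (n : nat) (L : seq (nat * nat)).
Hypothesis L_inside : forall a : nat * nat, a \in L -> 0 < a.2 /\ a.1 + a.2 <= n.
Hypothesis L_disjoint : {in L &, forall a b, a != b -> ~~ meets a b}.
Hypothesis L_uniq : uniq L.

Definition gaps : seq nat := [seq j <- iota 0 n | ~~ has (in_interval^~ j) L].

Definition tiles_from (p : nat) : seq (nat * nat) :=
  [seq a <- L | p <= a.1] ++ [seq (j, 1) | j <- gaps & p <= j].

Lemma uniq_gaps : uniq gaps.
Proof. by rewrite filter_uniq ?iota_uniq. Qed.

Lemma tiles_from_end : tiles_from n = [::].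
Proof.
rewrite /tiles_from !(eq_in_filter (a2 := pred0)) ?filter_pred0 //.
  by move=> j; rewrite mem_filter mem_iota => /and3P[_ _ /ltn_geF].
move=> a /L_inside[a_pos a_le_n] /=; apply/ltn_geF/(leq_trans _ a_le_n).
by rewrite -addn1 leq_add2l.
Qed.

Lemma tiles_from_block p (a : nat * nat) : a \in L -> a.1 = p ->
  perm_eq (tiles_from p) (a :: tiles_from (p + a.2)).
Proof.
move=> a_in a_p; have [a_pos _] := L_inside a_in.
have L_split : perm_eq [seq b <- L | p <= b.1] (a :: [seq b <- L | p + a.2 <= b.1]).
  apply: uniq_perm => [||b]; rewrite /= ?filter_uniq //.
    by rewrite mem_filter -a_p; lia.
  rewrite inE !mem_filter; have [->|b_ne_a] := eqVneq b a; first by rewrite a_in; lia.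
  case b_in: (b \in L); rewrite ?andbF //.
  have := L_disjoint b_in a_in b_ne_a; have [b_pos _] := L_inside b_in; rewrite /meets; lia.
have gaps_skip : [seq j <- gaps | p <= j] = [seq j <- gaps | p + a.2 <= j].
  apply: eq_in_filter => j; rewrite mem_filter => /andP[/hasPn/(_ a a_in)] /=.
  rewrite /in_interval; lia.
rewrite /tiles_from gaps_skip -cat_cons perm_cat2r.
exact: L_split.
Qed.

Lemma tiles_from_gap p : p < n -> {in L, forall a, a.1 < p -> a.1 + a.2 <= p} ->
  ~~ has (fun a => a.1 == p) L -> perm_eq (tiles_from p) ((p, 1) :: tiles_from p.+1).
Proof.
move=> p_lt_n before_p /hasPn no_start.
have L_same : [seq a <- L | p <= a.1] = [seq a <- L | p < a.1].
  by apply: eq_in_filter => a /no_start; rewrite ltn_neqAle eq_sym => ->.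
have p_gap : p \in gaps.
  rewrite mem_filter mem_iota leq0n p_lt_n !andbT; apply/hasPn => a a_in.
  apply/negP => /andP[a_le_p p_lt_end]; move: p_lt_end; rewrite ltnNge before_p //.
  by rewrite ltn_neqAle no_start.
have gaps_split : perm_eq [seq j <- gaps | p <= j] (p :: [seq j <- gaps | p < j]).
  apply: uniq_perm => [||j]; rewrite /= ?(filter_uniq _ uniq_gaps) //.
    by rewrite mem_filter ltnn.
  rewrite inE !(mem_filter _ _ gaps); have [->|j_ne_p] := eqVneq j p; first by rewrite leqnn p_gap.
  by rewrite leq_eqVlt eq_sym (negbTE j_ne_p).
rewrite /tiles_from L_same perm_sym -cat1s perm_catCA perm_cat2l perm_sym.
exact: perm_map gaps_split.
Qed.

Lemma tiling_from k p : p <= n -> n - p <= k ->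
  {in L, forall a, a.1 < p -> a.1 + a.2 <= p} ->
  exists c, [/\ all (fun t => 0 < t) c, sumn c + p = n &
                perm_eq (intervals_from p c) (tiles_from p)].
Proof.
elim: k p => [|k IH] p p_le_n n_p_le_k before_p;
  (have [->|p_lt_n] : p = n \/ p < n by lia); try by exists [::]; rewrite tiles_from_end.
  by lia.
have [/hasP[a a_in /eqP a_p]|no_start] := boolP (has (fun a => a.1 == p) L).
- have [a_pos a_le_n] := L_inside a_in.
  have before_a : {in L, forall b, b.1 < p + a.2 -> b.1 + b.2 <= p + a.2}.
    move=> b b_in b_lt; have [->|b_ne_a] := eqVneq b a; first by pair_lia.
    have := L_disjoint b_in a_in b_ne_a; have := before_p b b_in; rewrite /meets; pair_lia.
  have a_end : p + a.2 <= n by pair_lia.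
  have a_step : n - (p + a.2) <= k by pair_lia.
  have [c [c_pos c_sum c_perm]] := IH (p + a.2) a_end a_step before_a.
  exists (a.2 :: c); split; rewrite /= ?a_pos //; first by pair_lia.
  have -> : (p, a.2) = a by rewrite -a_p -surjective_pairing.
  rewrite perm_sym; apply: perm_trans (tiles_from_block a_in a_p) _.
  by rewrite perm_cons perm_sym.
- have before_next : {in L, forall b, b.1 < p.+1 -> b.1 + b.2 <= p.+1}.
    move=> b b_in b_lt; have := before_p b b_in; have := hasPn no_start b b_in; pair_lia.
  have [c [c_pos c_sum c_perm]] := IH p.+1 ltac:(lia) ltac:(lia) before_next.
  exists (1 :: c); split => //=; first by lia.
  rewrite perm_sym; apply: perm_trans (tiles_from_gap p_lt_n before_p no_start) _.
  by rewrite addn1 perm_cons perm_sym.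
Qed.

Lemma tiling : exists c, [/\ all (fun t => 0 < t) c, sumn c = n &
                             perm_eq (intervals c) (L ++ [seq (j, 1) | j <- gaps])].
Proof.
have [|||c [c_pos c_sum c_perm]] := @tiling_from n 0 => //; first by rewrite subn0.
exists c; split => //; first by rewrite -c_sum addn0.
by move: c_perm; rewrite /tiles_from !(eq_filter (a2 := predT)) // !filter_predT.
Qed.

End Tiling.

Lemma uniq_map_inj_in (T1 T2 : eqType) (f : T1 -> T2) (s : seq T1) :
  uniq (map f s) -> {in s &, injective f}.
Proof.
elim: s => //= a s IH /andP[fa_notin uniq_fs] x y; rewrite !inE.
case/predU1P=> [->|xs]; case/predU1P=> [->|ys] // fxy.
- by move: fa_notin; rewrite fxy map_f.
- by move: fa_notin; rewrite -fxy map_f.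
- exact: IH.
Qed.

Lemma perm_map_matching (T1 T2 U : eqType) (f1 : T1 -> U) (f2 : T2 -> U) s1 s2 :
  perm_eq (map f1 s1) (map f2 s2) ->
  exists M : seq (T1 * T2),
    [/\ map fst M = s1, perm_eq (map snd M) s2 & all (fun q => f1 q.1 == f2 q.2) M].
Proof.
elim: s1 s2 => [|a s1 IH] s2 /= f_perm.
  by exists [::]; case: s2 f_perm => // b s2 /perm_size.
have : f1 a \in map f2 s2 by rewrite -(perm_mem f_perm) mem_head.
case/mapP => b b_in fab.
have f2_rem : perm_eq (map f2 s2) (f2 b :: map f2 (rem b s2)).
  by rewrite -map_cons perm_map // perm_to_rem.
have := perm_trans f_perm f2_rem; rewrite -fab perm_cons => /IH [M [M1 M2 M12]].
exists ((a, b) :: M); split => /=; rewrite ?M1 ?fab ?eqxx //.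
by rewrite perm_sym; apply: perm_trans (perm_to_rem b_in) _; rewrite perm_cons perm_sym.
Qed.

(** * The dynamic program *)

Definition span (k : block -> nat) (b : block) : nat * nat := (k b, blen b).

Lemma overlapE bi bj :
  overlap bi bj = meets (span bk1 bi) (span bk1 bj) || meets (span bk2 bi) (span bk2 bj).
Proof. by rewrite /overlap /meets /= !(andbC (bk1 bi < _)) !(andbC (bk2 bi < _)). Qed.

Lemma overlapC bi bj : overlap bi bj = overlap bj bi.
Proof. by rewrite !overlapE meetsC [meets (span bk2 _) _]meetsC. Qed.

Lemma run_rcons B n l u xs v : run B n l u (rcons xs v) =
  if run B n l u xs is Some u' then
    if trans B n (l + size xs) u' v is Some (u'', _) then Some u'' else None
  else None.
Proof.
elim: xs l u => [|v' xs IH] l u /=; first by rewrite addn0; case: trans => [[]|].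
by case: trans => [[u' w]|] //=; rewrite IH addSnnS.
Qed.

Section DynamicProgram.

Variables (B : seq block) (n : nat).
Hypothesis B_inside :
  forall b, b \in B -> [/\ 0 < blen b, bk1 b + blen b <= n & bk2 b + blen b <= n].

Definition covered_by (k : block -> nat) (xs : seq bool) (j : nat) : bool :=
  has (fun i => nth false xs i && in_interval (span k (nth block0 B i)) j) (iota 0 (size xs)).

Definition dp_state (xs : seq bool) : state :=
  ([seq ~~ covered_by bk1 xs j | j <- iota 0 n], [seq ~~ covered_by bk2 xs j | j <- iota 0 n]).

Definition compatible (xs : seq bool) : Prop :=
  forall i j, i < size xs -> j < size xs -> i != j ->
    overlap (nth block0 B i) (nth block0 B j) -> ~~ (nth false xs i && nth false xs j).

Lemma covered_by_rcons k xs v j : covered_by k (rcons xs v) j =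
  covered_by k xs j || v && in_interval (span k (nth block0 B (size xs))) j.
Proof.
rewrite /covered_by size_rcons -addn1 iotaD has_cat /= orbF nth_rcons ltnn eqxx.
by congr orb; apply: eq_in_has => i; rewrite mem_iota /= => i_lt; rewrite nth_rcons i_lt.
Qed.

Lemma dp_state_nil : dp_state [::] = root_state n.
Proof. by rewrite /dp_state /root_state; congr pair; elim: n 0 => //= m IH p; rewrite IH. Qed.

Lemma dp_state_rcons_false xs : dp_state (rcons xs false) = dp_state xs.
Proof. by congr pair; apply: eq_map => j; rewrite covered_by_rcons orbF. Qed.

Lemma clear_range_dp_state k xs :
  clear_range [seq ~~ covered_by k xs j | j <- iota 0 n] (k (nth block0 B (size xs)))
              (blen (nth block0 B (size xs)))
  = [seq ~~ covered_by k (rcons xs true) j | j <- iota 0 n].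
Proof.
rewrite /clear_range size_map size_iota; apply/eq_in_map => j; rewrite mem_iota /= => j_lt.
rewrite covered_by_rcons (nth_map 0) ?size_iota // nth_iota // add0n.
by rewrite /in_interval /=; case: ifP => _; rewrite ?orbT ?orbF.
Qed.

Lemma fits_dp_state k xs : size xs < size B -> (forall b, b \in B -> k b + blen b <= n) ->
  fits [seq ~~ covered_by k xs j | j <- iota 0 n] (k (nth block0 B (size xs)))
       (blen (nth block0 B (size xs)))
  = all (fun i => nth false xs i ==>
                  ~~ meets (span k (nth block0 B i)) (span k (nth block0 B (size xs))))
        (iota 0 (size xs)).
Proof.
set b := nth block0 B (size xs) => xs_lt k_inside.
have b_in : b \in B by exact: mem_nth.
have blen_pos i : i <= size xs -> 0 < blen (nth block0 B i).
  by move=> i_le; have [] := B_inside (mem_nth block0 (leq_ltn_trans i_le xs_lt)).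
have k_end := k_inside b b_in.
have meets_b i (i_lt : i < size xs) :=
  @meetsP (span k (nth block0 B i)) (span k b) (blen_pos i (ltnW i_lt)) (blen_pos _ (leqnn _)).
apply/allP/allP => [free_b i | disjoint_b j].
- rewrite mem_iota add0n => /andP[_ i_lt]; apply/implyP => xs_i; apply/negP.
  move/(meets_b i i_lt) => -[j /andP[j_i j_b]].
  have j_n : j < n by move: j_b; rewrite /in_interval /=; lia.
  have := free_b j; rewrite mem_iota (nth_map 0) ?size_iota // nth_iota // add0n.
  move: (j_b); rewrite /in_interval => -> /(_ isT) /hasPn /(_ i).
  by rewrite mem_iota add0n i_lt xs_i j_i => /(_ isT).
- rewrite mem_iota => /andP[b_j j_lt]; have j_n : j < n by lia.
  rewrite (nth_map 0) ?size_iota // nth_iota // add0n; apply/hasPn => i.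
  rewrite mem_iota add0n => /andP[_ i_lt]; apply/negP => /andP[xs_i j_i].
  have := disjoint_b i; rewrite mem_iota add0n i_lt xs_i => /(_ isT) /negP; apply.
  apply/(meets_b i i_lt).
  by exists j; rewrite j_i /in_interval b_j j_lt.
Qed.

Definition earlier_disjoint (xs : seq bool) : bool :=
  all (fun i => nth false xs i ==> ~~ overlap (nth block0 B i) (nth block0 B (size xs)))
      (iota 0 (size xs)).

Lemma fits_dp_state_both xs : size xs < size B ->
  fits (dp_state xs).1 (bk1 (nth block0 B (size xs))) (blen (nth block0 B (size xs))) &&
  fits (dp_state xs).2 (bk2 (nth block0 B (size xs))) (blen (nth block0 B (size xs)))
  = earlier_disjoint xs.
Proof.
move=> xs_lt; rewrite !fits_dp_state //; try by move=> b /B_inside[].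
by rewrite -all_predI; apply: eq_all => i /=; rewrite overlapE negb_or; case: nth.
Qed.

Lemma compatible_rcons xs v :
  compatible (rcons xs v) <-> compatible xs /\ (v -> earlier_disjoint xs).
Proof.
have nth_last i : i < (size xs).+1 -> i < size xs \/ i = size xs by lia.
split => [compat | [compat v_disj] i j].
- split=> [i j i_lt j_lt|v_true].
    by have := compat i j; rewrite size_rcons !nth_rcons i_lt j_lt; apply; lia.
  apply/allP => i; rewrite mem_iota add0n => /andP[_ i_lt]; apply/implyP => xs_i; apply/negP => ov.
  have size_xs : size (rcons xs v) = (size xs).+1 by rewrite size_rcons.
  have := compat i (size xs) ltac:(lia) ltac:(lia) (negbT (ltn_eqF i_lt)) ov.
  by rewrite !nth_rcons i_lt ltnn eqxx xs_i v_true.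
- rewrite size_rcons !nth_rcons => /nth_last[i_lt|->] /nth_last[j_lt|->]; rewrite ?ltnn ?eqxx.
  + by rewrite i_lt j_lt; apply: compat.
  + rewrite i_lt => _ ov; case: v v_disj => [/(_ isT) /allP /(_ i)|_]; last by rewrite andbF.
    by rewrite mem_iota add0n leq0n i_lt => /(_ isT); case: nth => //=; rewrite ov.
  + rewrite j_lt overlapC => _ ov; case: v v_disj => [/(_ isT) /allP /(_ j)|_] //.
    by rewrite mem_iota add0n leq0n j_lt => /(_ isT); case: nth => //=; rewrite ov.
  + by [].
Qed.

Lemma run_compatible xs : size xs <= size B -> compatible xs ->
  run B n 0 (root_state n) xs = Some (dp_state xs).
Proof.
elim/last_ind: xs => [|xs v IH]; first by rewrite dp_state_nil.
rewrite size_rcons => xs_lt /compatible_rcons[compat v_disj].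
rewrite run_rcons IH ?(ltnW xs_lt) // add0n /trans xs_lt.
case: v v_disj => [/(_ isT)|_]; last by rewrite dp_state_rcons_false.
by rewrite -fits_dp_state_both // => ->; rewrite !clear_range_dp_state.
Qed.

Lemma run_some_compatible xs u : size xs <= size B ->
  run B n 0 (root_state n) xs = Some u -> compatible xs.
Proof.
elim/last_ind: xs u => [|xs v IH] u; first by move=> _ _ i.
rewrite size_rcons run_rcons => xs_lt.
case run_xs: run => [u'|] //; have compat := IH u' (ltnW xs_lt) run_xs.
move: run_xs; rewrite run_compatible ?(ltnW xs_lt) // => -[<-].
rewrite add0n /trans xs_lt => run_v; apply/compatible_rcons; split => // v_true.
by move: run_v; rewrite v_true -fits_dp_state_both //; case: (_ && _).
Qed.

Lemma compatible_take l xs : compatible xs -> compatible (take l xs).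
Proof.
move=> compat i j; rewrite size_take_min => i_lt j_lt ij ov.
by rewrite !nth_take; [apply: compat => //; lia | lia | lia].
Qed.

Lemma feasibleE x : feasible B x <->
  [/\ size x = (size B).+1, nth false x (size B) & compatible (take (size B) x)].
Proof.
split=> -[size_x x_last compat]; split=> // i j i_lt j_lt.
- move: i_lt j_lt; rewrite size_takel ?size_x // => i_lt j_lt ij ov.
  by rewrite !nth_take //; apply: compat.
- have := compat i j; rewrite size_takel ?size_x // !nth_take //; exact.
Qed.

Lemma rT_path_run us x : rT_path B n us x -> forall l, l <= size B ->
  run B n 0 (root_state n) (take l x) = Some (nth (root_state n) us l).
Proof.
move=> [size_x _ us_root _ arcs]; elim=> [|l IH] l_le; first by rewrite take0 us_root.
rewrite (take_nth false) ?size_x; last by lia.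
rewrite run_rcons IH ?(ltnW l_le) // add0n size_takel ?size_x; last by lia.
by have [_ [w ->]] := arcs l (ltnW l_le).
Qed.

Lemma rT_path_feasible us x : rT_path B n us x -> feasible B x.
Proof.
move=> path; have [size_x _ _ _ arcs] := path; apply/feasibleE; split => //.
  by have [_ [w]] := arcs _ (leqnn _); rewrite /trans ltnn eqxx; case: nth.
apply: (run_some_compatible _ (rT_path_run path (leqnn _))).
by rewrite size_takel ?size_x.
Qed.

Lemma feasible_rT_path x : feasible B x -> exists us, rT_path B n us x.
Proof.
move=> /feasibleE[size_x x_last compat].
pose us := [seq if l <= size B then dp_state (take l x) else terminal_state n
           | l <- iota 0 (size B).+2].
have us_nth l : l < (size B).+2 -> nth (root_state n) us l =
    if l <= size B then dp_state (take l x) else terminal_state n.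
  by move=> l_lt; rewrite (nth_map 0) ?size_iota // nth_iota.
have run_take l : l <= size B -> run B n 0 (root_state n) (take l x) = Some (dp_state (take l x)).
  move=> l_le; apply: run_compatible; first by rewrite size_takel ?size_x; lia.
  by rewrite -(take_takel x l_le); apply: compatible_take.
exists us; split; rewrite ?size_map ?size_iota ?us_nth ?take0 ?dp_state_nil ?ltnn //.
move=> l l_le; rewrite !us_nth ?l_le; try lia; split.
  by exists (take l x); rewrite run_take // size_takel ?size_x; last lia.
case: (ltnP l (size B)) => l_lt; last first.
  have -> : l = size B by lia.
  by rewrite /trans ltnn eqxx x_last; exists 0%R.
have := run_take _ l_lt; rewrite (take_nth false) ?size_x; last by lia.
rewrite run_rcons run_take ?(ltnW l_lt) // add0n size_takel ?size_x; last by lia.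
by case: trans => [[u w]|] // [<-]; exists w.
Qed.

Lemma rT_path_weight us x : rT_path B n us x -> path_weight B n us x = objective B n x.
Proof.
move=> [size_x _ _ _ arcs]; rewrite /path_weight /objective big_ord_recr /=.
have -> : arc_weight B n (size B) (nth (root_state n) us (size B)) (nth false x (size B)) = 0%R.
  by rewrite /arc_weight /trans ltnn eqxx; case: nth.
rewrite addr0 [in RHS]big_mkcond; congr (_ + _)%R; apply: eq_bigr => -[i i_lt] _ /=.
have [_ [w arc]] := arcs i (ltnW i_lt); rewrite /arc_weight arc; move: arc.
by rewrite /trans i_lt; case: nth; [case: ifP => // _ [_ <-] | case=> _ <-].
Qed.

Lemma min_pathP x : (exists us, min_path B n us x) <-> optimal B n x.
Proof.
split=> [[us [x_path x_min]]|[x_feas x_opt]].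
  split=> [|y /feasible_rT_path[us' y_path]]; first exact: rT_path_feasible x_path.
  by rewrite -(rT_path_weight x_path) -(rT_path_weight y_path); apply: x_min.
have [us x_path] := feasible_rT_path x_feas; exists us; split=> // us' y y_path.
by rewrite (rT_path_weight x_path) (rT_path_weight y_path); apply/x_opt/rT_path_feasible/y_path.
Qed.

End DynamicProgram.

(** * Chosen blocks and common partitions *)

Lemma mem_chosen B x b :
  reflect (exists2 i, i < size B & nth false x i /\ b = nth block0 B i) (b \in chosen B x).
Proof.
apply: (iffP mapP) => [[i]|[i i_lt [x_i ->]]].
  by rewrite mem_filter mem_iota add0n => /andP[x_i /andP[_ i_lt]] ->; exists i.
by exists i; rewrite // mem_filter mem_iota add0n x_i i_lt.
Qed.

Lemma chosen_sub B x : {subset chosen B x <= B}.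
Proof. by move=> b /mem_chosen[i i_lt [_ ->]]; apply: mem_nth. Qed.

Lemma uniq_chosen B x : uniq B -> uniq (chosen B x).
Proof.
move=> B_uniq; rewrite map_inj_in_uniq ?filter_uniq ?iota_uniq // => i j.
rewrite !mem_filter !mem_iota !add0n => /andP[_ /andP[_ i_lt]] /andP[_ /andP[_ j_lt]] ij.
by apply/eqP; rewrite -(nth_uniq block0 i_lt j_lt B_uniq) ij.
Qed.

Lemma big_chosen B x (F : block -> int) :
  (\sum_(i < size B | nth false x i) F (nth block0 B i) = \sum_(b <- chosen B x) F b)%R.
Proof. by rewrite big_map big_filter -[in RHS](subn0 (size B)) big_mkord. Qed.

Lemma chosen_disjoint B x : uniq B -> feasible B x ->
  {in chosen B x &, forall b b', b != b' -> ~~ overlap b b'}.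
Proof.
move=> B_uniq [_ _ compat] _ _ /mem_chosen[i i_lt [x_i ->]] /mem_chosen[j j_lt [x_j ->]] bij.
have ij : i != j by apply: contraNneq bij => ->.
by apply/negP => /(compat i j i_lt j_lt ij); rewrite x_i x_j.
Qed.

Definition indicator (B P : seq block) : seq bool := rcons [seq b \in P | b <- B] true.

Lemma nth_indicator B P i : i < size B -> nth false (indicator B P) i = (nth block0 B i \in P).
Proof. by move=> i_lt; rewrite nth_rcons size_map i_lt (nth_map block0). Qed.

Lemma chosen_indicator B P : chosen B (indicator B P) = [seq b <- B | b \in P].
Proof.
rewrite /chosen -[in RHS](mkseq_nth block0 B) /mkseq filter_map; congr map.
by apply: eq_in_filter => i; rewrite mem_iota add0n => /andP[_ /nth_indicator].
Qed.

Lemma indicator_feasible B P : uniq B ->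
  {in P &, forall b b', b != b' -> ~~ overlap b b'} -> feasible B (indicator B P).
Proof.
move=> B_uniq P_disjoint; split.
- by rewrite size_rcons size_map.
- by rewrite nth_rcons size_map ltnn eqxx.
move=> i j i_lt j_lt ij ov; rewrite !nth_indicator //; apply/negP => /andP[i_in j_in].
by move: ov; apply/negP/P_disjoint; rewrite // nth_uniq.
Qed.

Lemma is_blockP (S : eqType) n (s1 s2 : seq S) b :
  reflect [/\ 0 < blen b, bk1 b + blen b <= n, bk2 b + blen b <= n &
              slice s1 (span bk1 b) = slice s2 (span bk2 b)]
          (is_block n s1 s2 b).
Proof.
rewrite /is_block !slice_substr.
by apply: (iffP and5P) => [[? ? ? ? /eqP]|[? ? ? ->]]; split => //; lia.
Qed.

Lemma singletons_flatten (T : Type) (P : seq (seq T)) :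
  all (fun p => size p == 1) P -> P = map (fun a => [:: a]) (flatten P).
Proof. by elim: P => //= -[|a [|]] //= P IH /IH <-. Qed.

Lemma perm_pieces_of_tilings (S : eqType) (s1 s2 : seq S) c1 c2 L1 L2 u1 u2 :
  perm_eq s1 s2 -> sumn c1 = size s1 -> sumn c2 = size s2 ->
  perm_eq (intervals c1) (L1 ++ [seq (j, 1) | j <- u1]) ->
  perm_eq (intervals c2) (L2 ++ [seq (j, 1) | j <- u2]) ->
  all (gtn (size s1)) u1 -> all (gtn (size s2)) u2 ->
  map (slice s1) L1 = map (slice s2) L2 ->
  perm_eq (pieces s1 c1) (pieces s2 c2).
Proof.
move=> s12 c1_sum c2_sum c1_perm c2_perm u1_lt u2_lt L12.
set G1 := map (slice s1) [seq (j, 1) | j <- u1].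
set G2 := map (slice s2) [seq (j, 1) | j <- u2].
have pieces1 : perm_eq (pieces s1 c1) (map (slice s1) L1 ++ G1).
  by rewrite -map_cat pieces_intervals perm_map.
have pieces2 : perm_eq (pieces s2 c2) (map (slice s2) L2 ++ G2).
  by rewrite -map_cat pieces_intervals perm_map.
have flat1 : perm_eq s1 (flatten (map (slice s1) L1) ++ flatten G1).
  by have := perm_flatten pieces1; rewrite flatten_pieces flatten_cat c1_sum take_size.
have flat2 : perm_eq s2 (flatten (map (slice s2) L2) ++ flatten G2).
  by have := perm_flatten pieces2; rewrite flatten_pieces flatten_cat c2_sum take_size.
have G12 : perm_eq (flatten G1) (flatten G2).
  rewrite -(perm_cat2l (flatten (map (slice s1) L1))) {2}L12.
  by apply: perm_trans _ (perm_trans s12 flat2); rewrite perm_sym.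
have single_pieces (s : seq S) (u : seq nat) : all (gtn (size s)) u ->
    map (slice s) [seq (j, 1) | j <- u]
    = map (fun a => [:: a]) (flatten (map (slice s) [seq (j, 1) | j <- u])).
  move=> /allP u_lt; apply: singletons_flatten; apply/allP => p /mapP[_ /mapP[j j_u ->] ->].
  by rewrite size_slice //= addn1; apply: u_lt.
apply: perm_trans pieces1 _; rewrite perm_sym; apply: perm_trans pieces2 _.
rewrite -L12 perm_cat2l /G1 /G2 (single_pieces _ _ u1_lt) (single_pieces _ _ u2_lt).
by rewrite perm_map // perm_sym.
Qed.

Lemma sum_long_one_minus (T : Type) (f : T -> nat) (s : seq T) : all (fun q => 0 < f q) s ->
  (\sum_(q <- s | (1 < f q)%N) (1 - Posz (f q)) = Posz (size s) - Posz (sumn (map f s)))%R.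
Proof.
elim: s => [|q s IH] /=; first by rewrite big_nil.
by move=> /andP[fq_pos /IH]; rewrite big_cons; case: ifP => long_q ->; lia.
Qed.

Section MatchedPieces.

Variables (S : eqType) (n : nat) (s1 s2 : seq S).
Hypotheses (size_s1 : size s1 = n) (size_s2 : size s2 = n).

Lemma common_partition_blocks c1 c2 : common_partition s1 s2 c1 c2 ->
  exists P : seq block, [/\ uniq P, all (is_block n s1 s2) P,
    {in P &, forall b b', b != b' -> ~~ overlap b b'},
    sumn (map blen P) = n & size P = size c1].
Proof.
move=> /and3P[/andP[c1_pos /eqP c1_sum] /andP[c2_pos /eqP c2_sum]].
rewrite !pieces_intervals => /perm_map_matching[M [M1 M2 M12]].
have in1 q : q \in M -> q.1 \in intervals c1 by move=> q_in; rewrite -M1 map_f.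
have in2 q : q \in M -> q.2 \in intervals c2 by move=> q_in; rewrite -(perm_mem M2) map_f.
have inside1 q : q \in M -> 0 < q.1.2 /\ q.1.1 + q.1.2 <= n.
  by move=> /in1 /(mem_intervals_from c1_pos) []; rewrite c1_sum size_s1.
have inside2 q : q \in M -> 0 < q.2.2 /\ q.2.1 + q.2.2 <= n.
  by move=> /in2 /(mem_intervals_from c2_pos) []; rewrite c2_sum size_s2.
have same_slice q : q \in M -> slice s1 q.1 = slice s2 q.2 by move=> /(allP M12) /eqP.
have same_len q : q \in M -> q.1.2 = q.2.2.
  move=> q_in; have := congr1 size (same_slice q q_in).
  by rewrite !size_slice ?size_s1 ?size_s2; [|case: (inside2 q q_in)|case: (inside1 q q_in)].
have fst_inj : {in M &, injective fst}.
  by apply: uniq_map_inj_in; rewrite M1 uniq_intervals_from.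
have snd_inj : {in M &, injective snd}.
  by apply: uniq_map_inj_in; rewrite (perm_uniq M2) uniq_intervals_from.
pose blk (q : (nat * nat) * (nat * nat)) : block := (q.1.1, q.2.1, q.1.2).
have span1 q : span bk1 (blk q) = q.1 by case: q => [[]].
have span2 q : q \in M -> span bk2 (blk q) = q.2.
  by move=> /same_len; case: q => [[? ?] [? ?]] /= ->.
exists (map blk M); split.
- have M_uniq : uniq M by apply: (map_uniq (f := fst)); rewrite M1 uniq_intervals_from.
  rewrite map_inj_in_uniq // => q q' q_in q'_in /(congr1 (span bk1)).
  by rewrite !span1; apply: fst_inj.
- apply/allP => _ /mapP[q q_in ->]; apply/is_blockP; rewrite span1 span2 // same_slice //.
  have := inside1 q q_in; have := inside2 q q_in; have := same_len q q_in.
  by rewrite /blen /bk1 /bk2 /=; split => //; pair_lia.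
- move=> _ _ /mapP[q q_in ->] /mapP[q' q'_in ->] qq'.
  have {}qq' : q != q' by apply: contraNneq qq' => ->.
  rewrite overlapE !span1 !span2 // negb_or; apply/andP; split.
  + apply: (intervals_from_disjoint c1_pos (in1 q q_in) (in1 q' q'_in)).
    by apply: contraNneq qq' => /fst_inj ->.
  + apply: (intervals_from_disjoint c2_pos (in2 q q_in) (in2 q' q'_in)).
    by apply: contraNneq qq' => /snd_inj ->.
- by rewrite -size_s1 -c1_sum -(map_snd_intervals_from 0 c1) -/(intervals c1) -M1 -!map_comp.
- by rewrite size_map -(size_intervals_from 0 c1) -/(intervals c1) -M1 size_map.
Qed.

End MatchedPieces.

Lemma exists_minimizer (T : Type) (P : T -> Prop) (f : T -> nat) :
  (exists x, P x) -> exists x, P x /\ forall y, P y -> f x <= f y.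
Proof.
move=> [x Px].
have [k [[[y [Py <-]] k_min] _]] := dec_inh_nat_subset_has_unique_least_element
  (fun k => exists y, P y /\ f y = k) (fun k => classic _)
  (ex_intro _ (f x) (ex_intro _ x (conj Px erefl))).
by exists y; split=> // z Pz; apply/ssrnat.leP; apply: k_min; exists z.
Qed.

Section CommonPartitions.

Variables (S : eqType) (n : nat) (s1 s2 : seq S) (B : seq block).
Hypotheses (size_s1 : size s1 = n) (size_s2 : size s2 = n) (s12 : perm_eq s1 s2).
Hypotheses (B_uniq : uniq B) (B_long : forall b, (b \in B) = is_long_block n s1 s2 b).

Lemma long_blocks_inside b : b \in B ->
  [/\ 0 < blen b, bk1 b + blen b <= n & bk2 b + blen b <= n].
Proof. by rewrite B_long => /andP[/is_blockP[]]. Qed.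

Lemma chosen_tiling x k : feasible B x ->
  (forall b, b \in B -> k b + blen b <= n) ->
  (forall b b', ~~ overlap b b' -> ~~ meets (span k b) (span k b')) ->
  exists c, [/\ all (fun t => 0 < t) c, sumn c = n &
    perm_eq (intervals c)
      (map (span k) (chosen B x) ++ [seq (j, 1) | j <- gaps n (map (span k) (chosen B x))])].
Proof.
move=> x_feas k_inside k_disjoint; have C_disjoint := chosen_disjoint B_uniq x_feas.
have blen_pos b : b \in chosen B x -> 0 < blen b.
  by move/chosen_sub/long_blocks_inside => [].
apply: tiling.
- move=> _ /mapP[b b_in ->]; split; first exact: blen_pos.
  exact/k_inside/(chosen_sub b_in).
- move=> _ _ /mapP[b b_in ->] /mapP[b' b'_in ->] bb'; apply/k_disjoint/C_disjoint => //.
  by apply: contraNneq bb' => ->.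
- rewrite map_inj_in_uniq ?uniq_chosen // => b b' b_in b'_in [kbb' lbb'].
  apply/eqP/negPn/negP => bb'; have := k_disjoint _ _ (C_disjoint b b' b_in b'_in bb').
  by rewrite /span -kbb' -lbb' meetsxx ?blen_pos.
Qed.

Lemma gaps_chosen k x : gaps n (map (span k) (chosen B x))
  = [seq j <- iota 0 n | ~~ has (fun b => (k b <= j) && (j < k b + blen b)) (chosen B x)].
Proof. by apply: eq_filter => j; rewrite has_map. Qed.

Lemma partition_of_feasible x : feasible B x ->
  objective B n x = Posz (size (chosen B x) + size (uncovered1 B n x))
  /\ exists c1 c2, [/\ common_partition s1 s2 c1 c2,
       size c1 = size (chosen B x) + size (uncovered1 B n x),
       perm_eq (intervals c1)
         ([seq span bk1 b | b <- chosen B x] ++ [seq (j, 1) | j <- uncovered1 B n x]) &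
       perm_eq (intervals c2)
         ([seq span bk2 b | b <- chosen B x] ++ [seq (j, 1) | j <- uncovered2 B n x])].
Proof.
move=> x_feas; set C := chosen B x.
have [c1 [c1_pos c1_sum c1_perm]] : exists c1, [/\ all (fun t => 0 < t) c1, sumn c1 = n &
    perm_eq (intervals c1) (map (span bk1) C ++ [seq (j, 1) | j <- uncovered1 B n x])].
  rewrite /uncovered1 -gaps_chosen; apply: chosen_tiling => // [b /long_blocks_inside[] //|b b'].
  by rewrite overlapE negb_or => /andP[].
have [c2 [c2_pos c2_sum c2_perm]] : exists c2, [/\ all (fun t => 0 < t) c2, sumn c2 = n &
    perm_eq (intervals c2) (map (span bk2) C ++ [seq (j, 1) | j <- uncovered2 B n x])].
  rewrite /uncovered2 -gaps_chosen; apply: chosen_tiling => // [b /long_blocks_inside[] //|b b'].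
  by rewrite overlapE negb_or => /andP[].
have n_split : n = sumn (map blen C) + size (uncovered1 B n x).
  have := perm_sumn (perm_map snd c1_perm).
  rewrite /intervals map_snd_intervals_from c1_sum map_cat sumn_cat -map_comp => {1}->.
  by congr addn; elim: (uncovered1 B n x) => //= j u ->.
split.
  have C_long : all (fun b => 1 < blen b) C.
    by apply/allP => b /chosen_sub; rewrite B_long => /andP[].
  rewrite /objective (big_chosen B x (fun b => 1 - Posz (blen b))%R) -/C.
  rewrite -{1}(all_filterP C_long) big_filter.
  rewrite sum_long_one_minus ?(sub_all (fun b => @ltnW 1 (blen b)) C_long) // {1}n_split; lia.
have below_n (p : pred nat) : all (gtn n) [seq j <- iota 0 n | p j].
  by apply/allP => j; rewrite mem_filter mem_iota => /andP[_ /andP[_]].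
exists c1, c2; split => //.
  rewrite /common_partition /is_partition c1_pos c2_pos c1_sum c2_sum size_s1 size_s2 !eqxx /=.
  apply: (perm_pieces_of_tilings s12 _ _ c1_perm c2_perm); rewrite ?size_s1 ?size_s2 //.
  - exact: below_n.
  - exact: below_n.
  rewrite -(map_comp (slice s1)) -(map_comp (slice s2)); apply/eq_in_map => b b_in /=.
  by have := chosen_sub b_in; rewrite B_long => /andP[/is_blockP[]].
by rewrite -(size_intervals_from 0 c1) (perm_size c1_perm) size_cat !size_map.
Qed.

Lemma objective_indicator P : uniq P -> all (is_block n s1 s2) P -> sumn (map blen P) = n ->
  objective B n (indicator B P) = Posz (size P).
Proof.
move=> P_uniq P_blocks P_sum.
have P_pos : all (fun b => 0 < blen b) P.
  by apply: sub_all P_blocks => b /is_blockP[].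
have chosen_long : perm_eq (chosen B (indicator B P)) [seq b <- P | 1 < blen b].
  rewrite chosen_indicator; apply: uniq_perm; rewrite ?filter_uniq // => b.
  rewrite !mem_filter B_long /is_long_block andbC.
  by case b_in: (b \in P); rewrite ?andbF ?(allP P_blocks b b_in).
rewrite /objective (big_chosen B _ (fun b => 1 - Posz (blen b))%R) (perm_big _ chosen_long).
by rewrite big_filter sum_long_one_minus // P_sum addrC subrK.
Qed.

Lemma feasible_of_partition c1 c2 : common_partition s1 s2 c1 c2 ->
  exists2 y, feasible B y & objective B n y = Posz (size c1).
Proof.
move=> /(common_partition_blocks size_s1 size_s2) [P [P_uniq P_blocks P_disjoint P_sum <-]].
by exists (indicator B P); [apply: indicator_feasible | apply: objective_indicator].
Qed.

Lemma exists_optimal : exists x, optimal B n x.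
Proof.
have feasible0 : feasible B (indicator B [::]) by apply: indicator_feasible.
have [x [x_feas x_min]] := exists_minimizer (P := feasible B)
  (fun x => size (chosen B x) + size (uncovered1 B n x)) (ex_intro _ _ feasible0).
exists x; split=> // y y_feas.
by rewrite (partition_of_feasible x_feas).1 (partition_of_feasible y_feas).1 lez_nat x_min.
Qed.

End CommonPartitions.

Unset Implicit Arguments.
Theorem mainTheorem1 (Sigma : finType) (n : nat) (s1 s2 : seq Sigma) (B : seq block)
  (Hs1 : size s1 = n) (Hs2 : size s2 = n) (Hrel : perm_eq s1 s2)
  (HBuniq : uniq B) (HB : forall b, (b \in B) = is_long_block n s1 s2 b) :
  (* the assignments encoded by r-T paths are exactly the feasible ones *)
  (forall x : seq bool, (exists us, rT_path B n us x) <-> feasible B x)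
  (* path weight = objective value *)
  /\ (forall us x, rT_path B n us x -> path_weight B n us x = objective B n x)
  (* objective = size of the common partition made of the chosen blocks
     and single symbols at the uncovered positions *)
  /\ (forall x, feasible B x ->
        objective B n x = Posz (size (chosen B x) + size (uncovered1 B n x))
        /\ exists c1 c2, [/\ common_partition s1 s2 c1 c2,
             size c1 = size (chosen B x) + size (uncovered1 B n x),
             perm_eq (intervals c1)
               ([seq (bk1 b, blen b) | b <- chosen B x]
                ++ [seq (j, 1) | j <- uncovered1 B n x]) &
             perm_eq (intervals c2)
               ([seq (bk2 b, blen b) | b <- chosen B x]
                ++ [seq (j, 1) | j <- uncovered2 B n x])])
  (* Opt(D) = Opt(MCSP) *)
  /\ (forall x, (exists us, min_path B n us x) <-> optimal B n x)
  (* minimum path weight = minimum size of a common partition *)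
  /\ (exists us x, min_path B n us x)
  /\ (forall us x, min_path B n us x ->
        (exists c1 c2, common_partition s1 s2 c1 c2 /\
                       path_weight B n us x = Posz (size c1))
        /\ (forall c1 c2, common_partition s1 s2 c1 c2 ->
                       (path_weight B n us x <= Posz (size c1))%R)).
Proof.
have B_inside := long_blocks_inside HB.
have partition := partition_of_feasible Hs1 Hs2 Hrel HBuniq HB.
split=> [x|]; first by split=> [[us /(rT_path_feasible B_inside)]|/(feasible_rT_path B_inside)].
split; first exact: rT_path_weight.
split; first exact: partition.
split; first exact: min_pathP.
split.
  by have [x /(min_pathP B_inside)[us ?]] := exists_optimal Hs1 Hs2 Hrel HBuniq HB; exists us, x.
move=> us x [x_path x_min]; split.
  have [obj [c1 [c2 [c12 size_c1 _ _]]]] := partition x (rT_path_feasible B_inside x_path).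
  by exists c1, c2; rewrite rT_path_weight // obj size_c1.
move=> c1 c2 /(feasible_of_partition Hs1 Hs2 HBuniq HB) [y y_feas <-].
have [us' y_path] := feasible_rT_path B_inside y_feas.
by rewrite -(rT_path_weight y_path); apply: x_min.
Qed.
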